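(* Let $(\mathcal S,\mathcal A,P,r)$ be any finite MDP (general/multichain) and $(g^\star,h^\star)$ a solution of the modified Bellman equations. Let $V^0\in\mathbb R^n$, let $\lambda_{k+1}\le\lambda_k<1$ for $k\ge1$ with $\lim_k\lambda_k=0$, set $\lambda_0=1$, let $V^k=\lambda_kV^0+(1-\lambda_k)TV^{k-1}$ for $k\ge1$, and let $\pi_k$ be greedy policies, $T^{\pi_k}V^k=TV^k$. Then there exists an integer $K\ge0$ such that $\mathcal P^{\pi_k}g^\star=g^\star$ for all $k\ge K$; taking $K$ to be the minimal such integer, for every $k>K$, \[\|g^\star-g^{\pi_k}\|_\infty\le\|TV^k-V^k-g^\star\|_\infty\le2\Big(1-\sum_{i=1}^k\lambda_i\prod_{j=i}^k(1-\lambda_j)\Big)\|V^0-h^\star\|_\infty+2\prod_{j=K}^k(1-\lambda_j)\,\|g^\star\|_\infty.\]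
   Context: An MDP $(\mathcal S,\mathcal A,P,r)$ has finite state space $\mathcal S$ ($|\mathcal S|=n$, functions identified with $\mathbb R^n$), finite action space, transition probabilities $P(s'\mid s,a)$ and bounded reward $r$. For a policy $\pi$: $r^\pi(s)=\sum_a\pi(a\mid s)r(s,a)$, $\mathcal P^\pi(s,s')=\sum_a\pi(a\mid s)P(s'\mid s,a)$, $g^\pi(s)=\liminf_{T\to\infty}\frac1T\mathbb E_\pi[\sum_{t=0}^{T-1}r(s_t,a_t)\mid s_0=s]$, $g^\star=\max_\pi g^\pi$. $T^\pi V=r^\pi+\mathcal P^\pi V$, $(TV)(s)=\max_a\{r(s,a)+\sum_{s'}P(s'\mid s,a)V(s')\}$. A pair $(g,h)$ solves the modified Bellman equations if $\max_a\sum_{s'}P(s'\mid s,a)g(s')=g(s)$ and $\max_a\{r(s,a)+\sum_{s'}P(s'\mid s,a)h(s')\}=h(s)+g(s)$ for all $s$, with some policy attaining both maxima simultaneously; the first component of any solution equals $g^\star$. The convention $\lambda_0=1$ is the paper's. *)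

From HB Require Import structures.
From mathcomp Require Import all_boot all_order all_algebra.
From mathcomp Require Import all_classical all_reals all_analysis.
Set Implicit Arguments. Unset Strict Implicit. Unset Printing Implicit Defensive.
Import Order.TTheory GRing.Theory Num.Theory.
Local Open Scope ring_scope.

Section MDP.
Variables (R : realType) (S A : finType).

(* transition probabilities P s a s' = P(s'|s,a); vectors in R^n are S -> R *)
Definition is_kernel (P : S -> A -> S -> R) : Prop :=
  (forall s a s', 0 <= P s a s') /\ (forall s a, \sum_(s' : S) P s a s' = 1).

(* stationary (randomized) policy: pi s a = pi(a|s) *)
Definition is_policy (pi : S -> A -> R) : Prop :=
  (forall s a, 0 <= pi s a) /\ (forall s, \sum_(a : A) pi s a = 1).

(* maximum over the (nonempty, witnessed by a0) action space *)
Definition maxA (a0 : A) (f : A -> R) : R := \big[Num.max/f a0]_(a : A) f a.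

Definition rpi (r : S -> A -> R) (pi : S -> A -> R) : S -> R :=
  fun s => \sum_(a : A) pi s a * r s a.

Definition Ppi (P : S -> A -> S -> R) (pi : S -> A -> R) (V : S -> R) : S -> R :=
  fun s => \sum_(s' : S) (\sum_(a : A) pi s a * P s a s') * V s'.

Definition Tpi P r pi (V : S -> R) : S -> R := fun s => rpi r pi s + Ppi P pi V s.

Definition Tbell (a0 : A) (P : S -> A -> S -> R) (r : S -> A -> R) (V : S -> R)
  : S -> R :=
  fun s => maxA a0 (fun a => r s a + \sum_(s' : S) P s a s' * V s').

Definition supnorm (v : S -> R) : R := \big[Num.max/0]_(s : S) `|v s|.

(* average reward of a stationary policy:
   g^pi(s) = liminf_T (1/T) E_pi[sum_{t<T} r(s_t,a_t) | s_0 = s]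
           = liminf_T (1/T) sum_{t<T} ((P^pi)^t r^pi)(s)  (T = n+1 >= 1) *)
Definition gpi (P : S -> A -> S -> R) (r : S -> A -> R) (pi : S -> A -> R)
  (s : S) : R :=
  limn_inf (fun n : nat =>
    (n.+1%:R)^-1 * \sum_(t < n.+1) iter t (Ppi P pi) (rpi r pi) s).

Definition modified_bellman (a0 : A) (P : S -> A -> S -> R) (r : S -> A -> R)
  (g h : S -> R) : Prop :=
  (forall s, maxA a0 (fun a => \sum_(s' : S) P s a s' * g s') = g s) /\
  (forall s, Tbell a0 P r h s = h s + g s) /\
  (exists d : S -> A, forall s,
      \sum_(s' : S) P s (d s) s' * g s' = g s /\
      r s (d s) + \sum_(s' : S) P s (d s) s' * h s' = h s + g s).
End MDP.

(* The iterates split as V^k = h* + c_k g* + x^k with c_0 = 0 and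
   c_(k+1) = (1 - lam_(k+1)) (c_k + 1).  Since g* is excessive, h* satisfies the second
   Bellman inequality and the policy d attains both, the residual x^k stays within
   R = |V^0 - h*|, and the increments x^k - x^(k-1) obey a linear recursion whose solution
   yields the coefficient 1 - sum_i lam_i prod_j (1 - lam_j) of R.  As lam_k -> 0, c_k -> +oo,
   so greedy policies eventually put no weight on actions that strictly decrease g*, i.e.
   P^(pi_k) g* = g* for k large; from that index K on, the g*-part of the error is damped by
   the factors 1 - lam_j.  Finally r^(pi_k) = V^k - P^(pi_k) V^k + g* + D_k with the Bellman
   residual D_k = T V^k - V^k - g*, and a Cesaro average along P^(pi_k) bounds g* - g^(pi_k)
   by |D_k|. *)

From HB Require Import structures.
From mathcomp Require Import all_boot all_order all_algebra.
From mathcomp Require Import all_classical all_reals all_analysis.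
From mathcomp Require Import ring lra.
Import Order.TTheory GRing.Theory Num.Theory.
Local Open Scope classical_set_scope.
Local Open Scope ring_scope.
Set Implicit Arguments. Unset Strict Implicit. Unset Printing Implicit Defensive.

Section limn_inf_bounds.
Variable R : realType.
Implicit Types u v : nat -> R.

Lemma le_limn_inf u v : bounded_fun u -> bounded_fun v ->
  (forall n, u n <= v n) -> limn_inf u <= limn_inf v.
Proof.
move=> bu bv uv.
have infs_le k : infs u k <= infs v k.
  apply: lb_le_inf; first by exists (v k); exists k => /=.
  move=> _ [n /= kn <-]; apply: le_trans (uv n).
  apply: ge_inf; last by exists n.
  exact/has_lbound_sdrop/bounded_fun_has_lbound.
have cvg_infs w : bounded_fun w -> cvgn (infs w).
  move=> bw; apply: nondecreasing_is_cvgn; last exact: bounded_fun_has_ubound_infs.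
  exact/nondecreasing_infs/bounded_fun_has_lbound.
by apply: ler_lim; [exact: cvg_infs|exact: cvg_infs|exact: nearW].
Qed.

Lemma limn_inf_near u (c e C : R) :
  (forall n, `|u n - c| <= e + C * n.+1%:R^-1) -> `|limn_inf u - c| <= e.
Proof.
move=> near_u.
have inv_ge0 n : 0 <= n.+1%:R^-1 :> R by rewrite invr_ge0.
have env_cvg (b a : R) : (fun n => b + a * n.+1%:R^-1 : R) @ \oo --> (b : R^o).
  rewrite -[X in _ --> X]addr0 -(mulr0 a).
  exact: cvgD (cvg_cst _) (cvgMl_tmp (a := a) (@cvg_harmonic R)).
have env_bnd (b a : R) : bounded_fun (fun n => b + a * n.+1%:R^-1).
  by apply: cvg_seq_bounded; apply/cvg_ex; exists b; exact: env_cvg.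
have u_bnd : bounded_fun u.
  exists (`|c| + `|e| + `|C|); split; first exact: num_real.
  move=> M lt_M n _; apply: le_trans (ltW lt_M).
  have Cy : C * n.+1%:R^-1 <= `|C|.
    rewrite (le_trans (ler_norm _)) // normrM (ger0_norm (inv_ge0 n)).
    by rewrite ler_piMr // invf_le1 ?ler1n ?ltr0n.
  rewrite -[u n](subrK c); apply: le_trans (ler_normD _ _) _.
  apply: le_trans (lerD (near_u n) (lexx `|c|)) _.
  by rewrite [_ + `|c|]addrC -addrA lerD2l; exact: lerD (ler_norm e) Cy.
have lo : c - e <= limn_inf u.
  rewrite -((cvg_limn_inf_sup (env_cvg (c - e) (- C))).1); apply: le_limn_inf => // n.
  by have := near_u n; rewrite ler_distl mulNr -addrA -opprD => /andP[].
have hi : limn_inf u <= c + e.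
  rewrite -((cvg_limn_inf_sup (env_cvg (c + e) C)).1); apply: le_limn_inf => // n.
  by have := near_u n; rewrite ler_distl addrA => /andP[].
by rewrite ler_norml; apply/andP; split; lra.
Qed.

End limn_inf_bounds.

Section expectation.
Variables (R : realFieldType) (I : finType).
Implicit Types (w f g : I -> R) (B c : R).

Definition stochastic w := (forall i, 0 <= w i) /\ \sum_i w i = 1.

Definition expect w f := \sum_i w i * f i.

Lemma expectD w f g : expect w (fun i => f i + g i) = expect w f + expect w g.
Proof. by rewrite /expect -big_split; apply: eq_bigr => i _; rewrite mulrDr. Qed.

Lemma expectB w f g : expect w (fun i => f i - g i) = expect w f - expect w g.
Proof. by rewrite /expect -sumrB; apply: eq_bigr => i _; rewrite mulrBr. Qed.

Lemma expectZ w c f : expect w (fun i => c * f i) = c * expect w f.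
Proof. by rewrite /expect mulr_sumr; apply: eq_bigr => i _; rewrite mulrCA. Qed.

Lemma expect_cst w c : stochastic w -> expect w (fun=> c) = c.
Proof. by case=> _ w1; rewrite /expect -mulr_suml w1 mul1r. Qed.

Lemma expect_affine w (a b : R) f : stochastic w ->
  expect w (fun i => a + b * f i) = a + b * expect w f.
Proof. by move=> sw; rewrite expectD expectZ expect_cst. Qed.

Lemma ler_expect w f g : (forall i, 0 <= w i) -> (forall i, f i <= g i) ->
  expect w f <= expect w g.
Proof. by move=> w0 fg; apply: ler_sum => i _; rewrite ler_wpM2l. Qed.

Lemma expect_le_ub w f B : stochastic w -> (forall i, f i <= B) -> expect w f <= B.
Proof. by move=> sw fB; rewrite -(expect_cst B sw); apply: ler_expect => //; case: sw. Qed.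

Lemma expect_ge_lb w f B : stochastic w -> (forall i, B <= f i) -> B <= expect w f.
Proof. by move=> sw Bf; rewrite -(expect_cst B sw); apply: ler_expect => //; case: sw. Qed.

Lemma norm_expect_le w f B : stochastic w -> (forall i, `|f i| <= B) -> `|expect w f| <= B.
Proof.
move=> sw fB; rewrite ler_norml expect_le_ub ?expect_ge_lb // => i.
  by have := fB i; rewrite ler_norml => /andP[].
by have := fB i; rewrite ler_norml => /andP[].
Qed.

Lemma expect_eq_ub_weight0 w f B i : stochastic w -> (forall j, f j <= B) ->
  expect w f = B -> f i < B -> w i = 0.
Proof.
move=> [w0 w1] fB wfB fiB.
have gap0 : \sum_j w j * (B - f j) = 0.
  by have := expectB w (fun=> B) f; rewrite expect_cst // wfB subrr.
have gap_ge0 j : true -> 0 <= w j * (B - f j) by rewrite mulr_ge0 // subr_ge0.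
have := psumr_eq0P gap_ge0 gap0 (i := i) isT.
by move/eqP; rewrite mulf_eq0 subr_eq0 (gt_eqF fiB) orbF => /eqP.
Qed.

End expectation.

Section supnorm.
Variables (R : realType) (S : finType).
Implicit Types v : S -> R.

Lemma normr_le_supnorm v s : `|v s| <= supnorm v.
Proof. exact: le_bigmax. Qed.

Lemma supnorm_ge0 v : 0 <= supnorm v.
Proof. exact: bigmax_ge_id. Qed.

Lemma supnorm_le v B : 0 <= B -> (forall s, `|v s| <= B) -> supnorm v <= B.
Proof. by move=> B0 vB; apply: bigmax_le. Qed.

End supnorm.

Section policy_evaluation.
Variables (R : realType) (S A : finType) (a0 : A) (P : S -> A -> S -> R)
  (r : S -> A -> R).
Hypothesis P_kernel : is_kernel P.
Implicit Types (sg : S -> A -> R) (U W : S -> R).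

Lemma kernel_stochastic s a : stochastic (P s a).
Proof. by case: P_kernel. Qed.

Lemma policy_stochastic sg s : is_policy sg -> stochastic (sg s).
Proof. by case. Qed.

Definition policy_kernel sg s s' := \sum_a sg s a * P s a s'.

Lemma policy_kernel_stochastic sg s : is_policy sg -> stochastic (policy_kernel sg s).
Proof.
case=> sg0 sg1; case: P_kernel => P0 P1; split=> [s'|].
  by apply: sumr_ge0 => a _; apply: mulr_ge0.
rewrite exchange_big -(sg1 s) /=; apply: eq_bigr => a _.
by rewrite -mulr_sumr P1 mulr1.
Qed.

Lemma PpiE sg W s : Ppi P sg W s = expect (policy_kernel sg s) W.
Proof. by []. Qed.

Lemma Ppi_expect sg W s : Ppi P sg W s = expect (sg s) (fun a => expect (P s a) W).
Proof.
rewrite PpiE /expect /policy_kernel; under eq_bigr do rewrite mulr_suml.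
rewrite exchange_big /=; apply: eq_bigr => a _; rewrite mulr_sumr.
by apply: eq_bigr => s' _; rewrite mulrA.
Qed.

Lemma Tpi_expect sg W s :
  Tpi P r sg W s = expect (sg s) (fun a => r s a + expect (P s a) W).
Proof. by rewrite expectD -Ppi_expect. Qed.

Lemma le_Tbell W s a : r s a + expect (P s a) W <= Tbell a0 P r W s.
Proof. exact: le_bigmax. Qed.

Lemma Tpi_le_Tbell sg W s : is_policy sg -> Tpi P r sg W s <= Tbell a0 P r W s.
Proof.
move=> sg_pol; rewrite Tpi_expect expect_le_ub //; first exact: policy_stochastic.
by move=> a; exact: le_Tbell.
Qed.

Lemma greedy_weight0 sg W s a : is_policy sg -> Tpi P r sg W = Tbell a0 P r W ->
  r s a + expect (P s a) W < Tbell a0 P r W s -> sg s a = 0.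
Proof.
move=> sg_pol greedy; apply: (expect_eq_ub_weight0 (f := fun b => r s b + expect (P s b) W)).
- exact: policy_stochastic.
- by move=> b; exact: le_Tbell.
- by rewrite -Tpi_expect greedy.
Qed.

Lemma Tbell_sub_ge sg U W s : is_policy sg -> Tpi P r sg W = Tbell a0 P r W ->
  Ppi P sg (fun s => U s - W s) s <= Tbell a0 P r U s - Tbell a0 P r W s.
Proof.
move=> sg_pol greedy; rewrite -greedy PpiE expectB -!PpiE lerBrDr /Tpi.
rewrite addrCA subrK; exact: (Tpi_le_Tbell U s sg_pol).
Qed.

Lemma Tbell_sub_le sg U W s : is_policy sg -> Tpi P r sg U = Tbell a0 P r U ->
  Tbell a0 P r U s - Tbell a0 P r W s <= Ppi P sg (fun s => U s - W s) s.
Proof.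
move=> sg_pol greedy; rewrite -greedy PpiE expectB -!PpiE lerBlDr /Tpi.
by have := Tpi_le_Tbell W s sg_pol; rewrite /Tpi; lra.
Qed.

Lemma Ppi0 sg : Ppi P sg (fun=> 0) = fun=> 0.
Proof. by apply: funext => s; rewrite PpiE /expect big1 // => s' _; rewrite mulr0. Qed.

Lemma PpiD sg U W : Ppi P sg (fun s => U s + W s) = fun s => Ppi P sg U s + Ppi P sg W s.
Proof. by apply: funext => s; rewrite PpiE expectD. Qed.

Lemma PpiB sg U W : Ppi P sg (fun s => U s - W s) = fun s => Ppi P sg U s - Ppi P sg W s.
Proof. by apply: funext => s; rewrite PpiE expectB. Qed.

Lemma iter_PpiD sg t U W : iter t (Ppi P sg) (fun s => U s + W s) =
  fun s => iter t (Ppi P sg) U s + iter t (Ppi P sg) W s.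
Proof. by elim: t => [//|t IH]; rewrite !iterS IH PpiD. Qed.

Lemma iter_PpiB sg t U W : iter t (Ppi P sg) (fun s => U s - W s) =
  fun s => iter t (Ppi P sg) U s - iter t (Ppi P sg) W s.
Proof. by elim: t => [//|t IH]; rewrite !iterS IH PpiB. Qed.

Lemma norm_iter_Ppi_le sg t W B : is_policy sg -> (forall s, `|W s| <= B) ->
  forall s, `|iter t (Ppi P sg) W s| <= B.
Proof.
move=> sg_pol WB; elim: t => [//|t IH] s.
by rewrite iterS PpiE; apply: norm_expect_le IH; exact: policy_kernel_stochastic.
Qed.

Lemma sum_iter_rpi_greedy sg W g s n :
  Tpi P r sg W = Tbell a0 P r W -> Ppi P sg g = g ->
  \sum_(t < n) iter t (Ppi P sg) (rpi r sg) s =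
  W s - iter n (Ppi P sg) W s + (n%:R * g s +
    \sum_(t < n) iter t (Ppi P sg) (fun s => Tbell a0 P r W s - W s - g s) s).
Proof.
move=> greedy harm_g; set D := fun s => _ - _ - _.
have rpiE : rpi r sg = fun s => W s - Ppi P sg W s + (g s + D s).
  by apply: funext => s'; rewrite /D -greedy /Tpi; ring.
have iter_g t : iter t (Ppi P sg) g = g by elim: t => [//|t IH]; rewrite iterS IH.
elim: n => [|n IH]; first by rewrite !big_ord0 mul0r /=; ring.
rewrite !big_ord_recr /= IH rpiE iter_PpiD iter_PpiB iter_PpiD iter_g -iterSr iterS.
by rewrite -natr1; ring.
Qed.

Lemma greedy_gain_near sg W g s : is_policy sg ->
  Tpi P r sg W = Tbell a0 P r W -> Ppi P sg g = g ->
  `|g s - gpi P r sg s| <= supnorm (fun s => Tbell a0 P r W s - W s - g s).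
Proof.
move=> sg_pol greedy harm_g; set D := fun s => _ - _ - _.
rewrite distrC; apply: (limn_inf_near (C := 2 * supnorm W)) => n.
have n1_gt0 : 0 < n.+1%:R :> R by rewrite ltr0n.
have W_bnd : `|W s - iter n.+1 (Ppi P sg) W s| <= 2 * supnorm W.
  apply: le_trans (ler_normB _ _) _; rewrite mulr2n mulrDl mul1r.
  apply: lerD; first exact: normr_le_supnorm.
  by apply: norm_iter_Ppi_le => // s'; exact: normr_le_supnorm.
have D_bnd : `|\sum_(t < n.+1) iter t (Ppi P sg) D s| <= n.+1%:R * supnorm D.
  rewrite -[n.+1 in X in _ <= X]card_ord -sum1_card natr_sum mulr_suml.
  apply: le_trans (ler_norm_sum _ _ _) _; apply: ler_sum => t _; rewrite mul1r.
  by apply: norm_iter_Ppi_le => // s'; exact: normr_le_supnorm.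
rewrite (sum_iter_rpi_greedy s n.+1 greedy harm_g) -/D.
move: W_bnd D_bnd; set x := W s - _; set y := \sum_(t < _) _; set N := n.+1%:R.
move=> x_bnd y_bnd.
have -> : N^-1 * (x + (N * g s + y)) - g s = N^-1 * x + N^-1 * y.
  by field; rewrite gt_eqF.
have N1_gt0 : 0 < N^-1 by rewrite invr_gt0.
apply: le_trans (ler_normD _ _) _; rewrite !normrM gtr0_norm // addrC.
apply: lerD; last by rewrite mulrC ler_wpM2r // ltW.
by rewrite ler_pdivrMl.
Qed.

End policy_evaluation.

Section stepsizes.
Variables (R : realType) (lam : nat -> R).
Hypothesis lam0 : lam 0%N = 1.
Hypothesis lam_step : forall k, (1 <= k)%N -> lam k.+1 <= lam k /\ lam k < 1.
Hypothesis lam_cvg0 : lam @ \oo --> 0.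

Lemma lam_le1 k : lam k <= 1.
Proof. by case: k => [|k]; [rewrite lam0 | exact/ltW/(@lam_step k.+1 isT).2]. Qed.

Lemma lam_nonincr : {homo lam : m n / (m <= n)%N >-> n <= m}.
Proof.
apply/nonincreasing_seqP => -[|k]; first by rewrite lam0 lam_le1.
exact: (@lam_step k.+1 isT).1.
Qed.

Lemma lam_ge0 k : 0 <= lam k.
Proof. by apply: (cvgr_to_le lam_cvg0); exists k => // n; exact: lam_nonincr. Qed.

Lemma one_minus_lam_ge0 k : 0 <= 1 - lam k.
Proof. by rewrite subr_ge0 lam_le1. Qed.

Lemma lam_sub_ge0 k : 0 <= lam k - lam k.+1.
Proof. by rewrite subr_ge0 lam_nonincr. Qed.

(* The coefficient of g* in V^k, chosen so that the anchored recursion of V^k - h* has no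
   g*-term (see [resid_rec]). *)
Fixpoint horizon k : R := if k is k'.+1 then (1 - lam k'.+1) * (horizon k' + 1) else 0.

Lemma horizon_ge0 k : 0 <= horizon k.
Proof. by elim: k => [|k IH] //=; rewrite mulr_ge0 ?one_minus_lam_ge0 ?addr_ge0. Qed.

Lemma lam_horizon_le1 k : lam k.+1 * (1 + horizon k) <= 1.
Proof.
elim: k => [|k IH]; first by rewrite /= addr0 mulr1 lam_le1.
apply: le_trans (_ : lam k.+1 * (1 + horizon k.+1) <= 1).
  by rewrite ler_wpM2r ?lam_nonincr // addr_ge0 // horizon_ge0.
have := lam_ge0 k.+1; have := lam_le1 k.+1; have := horizon_ge0 k.
have : 0 <= (1 - lam k.+1) * (1 - lam k.+1 * (1 + horizon k)).
  by rewrite mulr_ge0 ?one_minus_lam_ge0 ?subr_ge0.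
rewrite /=; nra.
Qed.

Lemma horizon_incr k : 0 <= horizon k.+1 - horizon k <= 1.
Proof.
have := lam_horizon_le1 k; have := lam_ge0 k.+1; have := horizon_ge0 k.
have : 0 <= lam k.+1 * (1 + horizon k) by rewrite mulr_ge0 ?addr_ge0 ?lam_ge0 ?horizon_ge0.
rewrite /=; move=> *; apply/andP; split; nra.
Qed.

Lemma horizon_incr_pred k : 0 <= horizon k - horizon k.-1 <= 1.
Proof. by case: k => [|k]; [rewrite subrr lexx ler01 | exact: horizon_incr]. Qed.

Lemma horizon_nondecr : {homo horizon : m n / (m <= n)%N >-> m <= n}.
Proof. by apply/nondecreasing_seqP => k; have /andP[+ _] := horizon_incr k; rewrite subr_ge0. Qed.

Lemma horizon_step_ge k M : horizon k <= M -> lam k.+1 < (2 * (1 + M))^-1 ->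
  1 / 2 <= horizon k.+1 - horizon k.
Proof.
move=> hM lam_small; have h0 := horizon_ge0 k; have l0 := lam_ge0 k.+1.
have M1_gt0 : 0 < 1 + M by rewrite ltr_pwDl // (le_trans h0).
have : lam k.+1 * (1 + horizon k) <= (2 * (1 + M))^-1 * (1 + M).
  by apply: ler_pM; rewrite ?addr_ge0 ?lerD2l // ltW.
rewrite invfM -mulrA mulVf ?gt_eqF // mulr1 /=; lra.
Qed.

Lemma horizon_cvgy : horizon @ \oo --> +oo.
Proof.
apply/cvgryPgt => M.
suff [k0 M_lt] : exists k0, M < horizon k0.
  by exists k0 => // k /horizon_nondecr; exact: lt_le_trans.
apply: contrapT => /forallNP M_ge; have {}M_ge k : horizon k <= M by rewrite leNgt; exact/negP.
have M_ge0 : 0 <= M := le_trans (horizon_ge0 0) (M_ge 0%N).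
have e_gt0 : 0 < (2 * (1 + M))^-1 by rewrite invr_gt0 mulr_gt0 // ltr_pwDl.
have [N _ lam_small] := cvgr_lt _ lam_cvg0 _ e_gt0.
have grow m : m%:R / 2 <= horizon (N + m).
  elim: m => [|m IH]; first by rewrite mul0r horizon_ge0.
  have := horizon_step_ge (M_ge (N + m)) (lam_small _ (leq_trans (leq_addr m N) (leqnSn _))).
  by rewrite addnS -(natr1 m); lra.
have := le_trans (grow (2 * (Num.truncn M).+1)%N) (M_ge _).
by rewrite natrM mulrC mulKf ?pnatr_eq0 // leNgt truncnS_gt.
Qed.

Definition anchor_coef k :=
  1 - \sum_(1 <= i < k.+1) (lam i * \prod_(i <= j < k.+1) (1 - lam j)).

Lemma anchor_coefS k :
  anchor_coef k.+1 = (1 - lam k.+1) * anchor_coef k + lam k.+1 ^+ 2.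
Proof.
rewrite /anchor_coef big_nat_recr //= big_nat1 (eq_big_nat _ _ (F2 := fun i =>
  lam i * \prod_(i <= j < k.+1) (1 - lam j) * (1 - lam k.+1))); last first.
  by move=> i /andP[_ ik]; rewrite big_nat_recr ?mulrA // ltnW.
by rewrite -mulr_suml; ring.
Qed.

Fixpoint incr_coef k : R :=
  if k is k'.+1 then (1 - lam k') * incr_coef k' + (lam k' - lam k'.+1) else 0.

Lemma incr_coef_ge0 k : 0 <= incr_coef k.
Proof. by elim: k => //= k IH; rewrite addr_ge0 ?mulr_ge0 ?one_minus_lam_ge0 ?lam_sub_ge0. Qed.

Lemma anchor_coefE k : lam k + (1 - lam k) * incr_coef k = anchor_coef k.
Proof.
elim: k => [|k IH]; first by rewrite /anchor_coef big_geq // lam0 /=; ring.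
rewrite anchor_coefS -IH /=; ring.
Qed.

Lemma anchor_coef_ge0 k : 0 <= anchor_coef k.
Proof.
by rewrite -anchor_coefE addr_ge0 ?lam_ge0 // mulr_ge0 ?one_minus_lam_ge0 ?incr_coef_ge0.
Qed.

Lemma prod_one_minus_lam_ge0 m n : 0 <= \prod_(m <= j < n) (1 - lam j).
Proof. by apply: prodr_ge0 => j _; exact: one_minus_lam_ge0. Qed.

Lemma prod_one_minus_lamS K k :
  (1 - lam k) * \prod_(K <= j < k) (1 - lam j) <= \prod_(K <= j < k.+1) (1 - lam j).
Proof.
case: (leqP K k) => [Kk|kK]; first by rewrite big_nat_recr //= mulrC.
rewrite !big_geq // ?mulr1; last exact: ltnW.
by rewrite gerBl lam_ge0.
Qed.

Section anchored_value_iteration.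
Variables (S A : finType) (a0 : A) (P : S -> A -> S -> R) (r : S -> A -> R)
  (g h : S -> R) (d : S -> A) (V : nat -> S -> R) (pi : nat -> S -> A -> R).
Hypothesis P_kernel : is_kernel P.
Hypothesis g_excessive : forall s a, expect (P s a) g <= g s.
Hypothesis h_bellman_le : forall s a, r s a + expect (P s a) h <= h s + g s.
Hypothesis d_g : forall s, expect (P s (d s)) g = g s.
Hypothesis d_h : forall s, r s (d s) + expect (P s (d s)) h = h s + g s.
Hypothesis V_rec : forall k, (1 <= k)%N ->
  V k = (fun s => lam k * V 0%N s + (1 - lam k) * Tbell a0 P r (V k.-1) s).
Hypothesis pi_policy : forall k, is_policy (pi k).
Hypothesis pi_greedy : forall k, Tpi P r (pi k) (V k) = Tbell a0 P r (V k).

Lemma Ppi_excessive sg s : is_policy sg -> Ppi P sg g s <= g s.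
Proof. by move=> sg_pol; rewrite Ppi_expect expect_le_ub //; exact: policy_stochastic. Qed.

Lemma Tpi_h_le sg s : is_policy sg -> Tpi P r sg h s <= h s + g s.
Proof. by move=> sg_pol; rewrite Tpi_expect expect_le_ub //; exact: policy_stochastic. Qed.

Definition dist0 := supnorm (fun s => V 0%N s - h s).

Definition resid k s := V k s - h s - horizon k * g s.

Definition Tresid k s := Tbell a0 P r (V k) s - h s - (horizon k + 1) * g s.

Definition resid_incr k s := resid k s - resid k.-1 s.

Lemma expect_V k w :
  expect w (V k) = expect w h + horizon k * expect w g + expect w (resid k).
Proof.
have -> : V k = fun s => h s + horizon k * g s + resid k s.
  by apply: funext => s; rewrite /resid; ring.
by rewrite !expectD expectZ.
Qed.

Lemma resid_rec k s : (1 <= k)%N ->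
  resid k s = lam k * resid 0 s + (1 - lam k) * Tresid k.-1 s.
Proof. by case: k => // k _; rewrite /resid /Tresid (V_rec (isT : 1 <= k.+1)%N) /=; ring. Qed.

Lemma Tresid_le k s : Tresid k s <= Ppi P (pi k) (resid k) s.
Proof.
rewrite /Tresid -pi_greedy /Tpi !PpiE expect_V -!PpiE.
have := Tpi_h_le s (pi_policy k); have := Ppi_excessive s (pi_policy k).
move: (horizon_ge0 k) => c_ge0 Pg_le.
have := ler_wpM2l c_ge0 Pg_le; rewrite /Tpi; lra.
Qed.

Lemma Tresid_ge k s : expect (P s (d s)) (resid k) <= Tresid k s.
Proof.
have := le_Tbell a0 P r (V k) s (d s); rewrite expect_V d_g.
have := d_h s; rewrite /Tresid; lra.
Qed.

Lemma norm_Tresid_le_resid k B : (forall s, `|resid k s| <= B) ->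
  forall s, `|Tresid k s| <= B.
Proof.
move=> x_le s; have := Tresid_ge k s; have := Tresid_le k s.
have := norm_expect_le (kernel_stochastic P_kernel s (d s)) x_le.
have := norm_expect_le (policy_kernel_stochastic P_kernel s (pi_policy k)) x_le.
rewrite -PpiE !ler_norml => /andP[? ?] /andP[? ?] ? ?; apply/andP; split; lra.
Qed.

Lemma norm_resid0_le s : `|resid 0 s| <= dist0.
Proof. by rewrite /resid /= mul0r subr0; exact: (normr_le_supnorm (fun s => V 0%N s - h s)). Qed.

Lemma norm_resid_le k s : `|resid k s| <= dist0.
Proof.
elim: k s => [|k IH] s; first exact: norm_resid0_le.
rewrite resid_rec //=; have := lam_ge0 k.+1; have := lam_le1 k.+1.
have := norm_Tresid_le_resid IH s; have := norm_resid0_le s.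
by rewrite !ler_norml => /andP[? ?] /andP[? ?] ? ?; apply/andP; split; nra.
Qed.

Lemma norm_Tresid_sub_resid0_le k s : `|Tresid k s - resid 0 s| <= 2 * dist0.
Proof.
apply: le_trans (ler_normB _ _) _; rewrite mulr2n mulrDl mul1r.
exact: lerD (norm_Tresid_le_resid (norm_resid_le k) s) (norm_resid0_le s).
Qed.

Lemma resid_incr0 : resid_incr 0 = fun=> 0.
Proof. by apply: funext => s; rewrite /resid_incr subrr. Qed.

Lemma Ppi_V_incr sg k s : Ppi P sg (fun s => V k.+1 s - V k s) s =
  Ppi P sg (resid_incr k.+1) s + (horizon k.+1 - horizon k) * Ppi P sg g s.
Proof.
have -> : (fun s => V k.+1 s - V k s) =
    fun s => resid_incr k.+1 s + (horizon k.+1 - horizon k) * g s.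
  by apply: funext => s'; rewrite /resid_incr /resid; ring.
by rewrite PpiE expectD expectZ.
Qed.

Lemma Tresid_incr_le k s : Tresid k s - Tresid k.-1 s <= Ppi P (pi k) (resid_incr k) s.
Proof.
case: k => [|k]; first by rewrite subrr resid_incr0 Ppi0.
have := Tbell_sub_le (V k) s (pi_policy k.+1) (pi_greedy k.+1).
rewrite Ppi_V_incr [k.+1.-1]/= /Tresid.
have /andP[dc_ge0 _] := horizon_incr k.
have := ler_wpM2l dc_ge0 (Ppi_excessive s (pi_policy k.+1)); lra.
Qed.

Lemma Tresid_incr_ge k s :
  Ppi P (pi k.-1) (resid_incr k) s
    - (horizon k - horizon k.-1) * (g s - Ppi P (pi k.-1) g s)
  <= Tresid k s - Tresid k.-1 s.
Proof.
case: k => [|k]; first by rewrite !subrr resid_incr0 Ppi0 mul0r subrr.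
have := Tbell_sub_ge (V k.+1) s (pi_policy k) (pi_greedy k).
by rewrite Ppi_V_incr [k.+1.-1]/= /Tresid; lra.
Qed.

Lemma resid_incrS k s : resid_incr k.+1 s =
  (1 - lam k) * (Tresid k s - Tresid k.-1 s) + (lam k - lam k.+1) * (Tresid k s - resid 0 s).
Proof.
rewrite /resid_incr (resid_rec s (isT : 1 <= k.+1)%N) /=.
case: k => [|k]; first by rewrite lam0; ring.
by rewrite (resid_rec s (isT : 1 <= k.+1)%N) /=; ring.
Qed.

Lemma bellman_residual_eq k s : (1 <= k)%N ->
  Tbell a0 P r (V k) s - V k s - g s =
  lam k * (Tresid k s - resid 0 s) + (1 - lam k) * (Tresid k s - Tresid k.-1 s).
Proof.
move=> k_ge1; have -> : Tbell a0 P r (V k) s - V k s - g s = Tresid k s - resid k s.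
  by rewrite /Tresid /resid; ring.
by rewrite (resid_rec s k_ge1); ring.
Qed.

Lemma resid_incr_le k s : resid_incr k s <= 2 * dist0 * incr_coef k.
Proof.
elim: k s => [|k IH] s; first by rewrite /resid_incr subrr /= mulr0.
rewrite resid_incrS /=.
have Pe_le : Ppi P (pi k) (resid_incr k) s <= 2 * dist0 * incr_coef k.
  by rewrite PpiE expect_le_ub //; exact: policy_kernel_stochastic.
have := Tresid_incr_le k s; have := norm_Tresid_sub_resid0_le k s.
rewrite ler_norml => /andP[_ Tx_le] dT_le.
have := ler_wpM2l (one_minus_lam_ge0 k) (le_trans dT_le Pe_le).
have := ler_wpM2l (lam_sub_ge0 k) Tx_le; lra.
Qed.

(* Before K the greedy policies may lose g-mass at every step; following the image G of g
   under the successive policy kernels, instead of bounding each loss by 2 |g|, makes these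
   losses telescope to g - G <= 2 |g|. *)
Definition g_band G := forall s, - supnorm g <= G s <= g s.

Lemma g_band_g : g_band g.
Proof.
move=> s; rewrite lexx andbT.
by have := normr_le_supnorm g s; rewrite ler_norml => /andP[].
Qed.

Lemma g_band_Ppi sg G : is_policy sg -> g_band G -> g_band (Ppi P sg G).
Proof.
move=> sg_pol G_band s; have w_stoch := policy_kernel_stochastic P_kernel s sg_pol.
apply/andP; split; first by rewrite PpiE expect_ge_lb // => s'; case/andP: (G_band s').
apply: le_trans (Ppi_excessive s sg_pol); rewrite !PpiE.
by apply: ler_expect => [|s']; [case: w_stoch | case/andP: (G_band s')].
Qed.

Section harmonic_tail.
Variable K : nat.
Hypothesis pi_harmonic : forall k, (K <= k)%N -> Ppi P (pi k) g = g.

Lemma Tresid_incr_ge_tail k G :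
  (forall s, - (2 * dist0 * incr_coef k) - \prod_(K <= j < k) (1 - lam j) * (g s - G s)
     <= resid_incr k s) ->
  forall s, - (2 * dist0 * incr_coef k)
              - \prod_(K <= j < k) (1 - lam j) * (g s - Ppi P (pi k.-1) G s)
            <= Tresid k s - Tresid k.-1 s.
Proof.
move=> e_ge s; set u := 2 * dist0 * incr_coef k; set mu := \prod_(_ <= _ < _) _.
have Pe_ge : - u - mu * (Ppi P (pi k.-1) g s - Ppi P (pi k.-1) G s)
             <= Ppi P (pi k.-1) (resid_incr k) s.
  have w_stoch := policy_kernel_stochastic P_kernel s (pi_policy k.-1).
  rewrite !PpiE -expectB; set Eg := expect _ _.
  have -> : - u - mu * Eg = - u + (- mu) * Eg by rewrite mulNr.
  rewrite /Eg -expect_affine //.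
  by apply: ler_expect => [|s']; [case: w_stoch | rewrite mulNr; exact: e_ge].
have := Tresid_incr_ge k s; case: (leqP K k.-1) => [Kk|kK].
  by rewrite pi_harmonic // in Pe_ge *; lra.
have mu1 : mu = 1 by rewrite /mu big_geq // (leq_trans (leqSpred k) kK).
rewrite mu1 !mul1r in Pe_ge *.
have /andP[_ dc_le1] := horizon_incr_pred k.
have := Ppi_excessive s (pi_policy k.-1); rewrite -subr_ge0 => Pg_ge0.
have := ler_piMl Pg_ge0 dc_le1; lra.
Qed.

Lemma resid_incr_ge k : exists2 G, g_band G &
  forall s, - (2 * dist0 * incr_coef k) - \prod_(K <= j < k) (1 - lam j) * (g s - G s)
    <= resid_incr k s.
Proof.
elim: k => [|k [G G_band e_ge]].
  by exists g => [|s]; [exact: g_band_g | rewrite resid_incr0 subrr /= !mulr0 subr0 oppr0].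
have G'_band := g_band_Ppi (pi_policy k.-1) G_band.
exists (Ppi P (pi k.-1) G) => // s; rewrite resid_incrS /=.
have gG_ge0 : 0 <= g s - Ppi P (pi k.-1) G s by rewrite subr_ge0; case/andP: (G'_band s).
have := ler_wpM2l (one_minus_lam_ge0 k) (Tresid_incr_ge_tail e_ge s).
have := ler_wpM2r gG_ge0 (prod_one_minus_lamS K k).
have := norm_Tresid_sub_resid0_le k s; rewrite ler_norml => /andP[Tx_ge _].
have := ler_wpM2l (lam_sub_ge0 k) Tx_ge; lra.
Qed.

Lemma bellman_residual_bound k s : (1 <= k)%N ->
  `|Tbell a0 P r (V k) s - V k s - g s|
    <= 2 * anchor_coef k * dist0 + 2 * \prod_(K <= j < k.+1) (1 - lam j) * supnorm g.
Proof.
move=> k_ge1; rewrite bellman_residual_eq // -anchor_coefE.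
have [G G_band e_ge] := resid_incr_ge k.
have dT_ge := Tresid_incr_ge_tail e_ge s.
have dT_le : Tresid k s - Tresid k.-1 s <= 2 * dist0 * incr_coef k.
  apply: le_trans (Tresid_incr_le k s) _; rewrite PpiE expect_le_ub //.
    exact: policy_kernel_stochastic.
  by move=> s'; exact: resid_incr_le.
have /andP[G'_ge G'_le] := g_band_Ppi (pi_policy k.-1) G_band s.
have gG_ge0 : 0 <= g s - Ppi P (pi k.-1) G s by rewrite subr_ge0.
have gG_le : g s - Ppi P (pi k.-1) G s <= 2 * supnorm g.
  by have := normr_le_supnorm g s; rewrite ler_norml => /andP[_]; lra.
have := norm_Tresid_sub_resid0_le k s; rewrite ler_norml => /andP[Tx_ge Tx_le].
have := ler_wpM2l (lam_ge0 k) Tx_ge; have := ler_wpM2l (lam_ge0 k) Tx_le.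
have := ler_wpM2l (one_minus_lam_ge0 k) dT_ge; have := ler_wpM2l (one_minus_lam_ge0 k) dT_le.
have := ler_wpM2r gG_ge0 (prod_one_minus_lamS K k).
have := ler_wpM2l (prod_one_minus_lam_ge0 K k.+1) gG_le.
have := mulr_ge0 (prod_one_minus_lam_ge0 K k.+1) (supnorm_ge0 g).
by rewrite ler_norml => *; apply/andP; split; lra.
Qed.

End harmonic_tail.

Definition gain_gap s a := g s - expect (P s a) g.

(* An action with a positive gain gap is worse than [d s] by at least
   horizon k * gap - 2 * dist0. *)
Lemma pi_harmonic_of_horizon k :
  (forall s a, 0 < gain_gap s a -> 2 * dist0 < horizon k * gain_gap s a) ->
  Ppi P (pi k) g = g.
Proof.
move=> gap_large; apply: funext => s.
have pi_gap0 a : 0 < gain_gap s a -> pi k s a = 0.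
  move=> gap_gt0; apply: greedy_weight0 (pi_policy k) (pi_greedy k) _.
  apply: lt_le_trans (le_Tbell a0 P r (V k) s (d s)).
  rewrite !expect_V d_g.
  have := h_bellman_le s a; have := d_h s; have := gap_large s a gap_gt0.
  have := norm_expect_le (kernel_stochastic P_kernel s a) (norm_resid_le k).
  have := norm_expect_le (kernel_stochastic P_kernel s (d s)) (norm_resid_le k).
  rewrite /gain_gap !ler_norml => /andP[? ?] /andP[? ?]; rewrite mulrBr; lra.
rewrite Ppi_expect -[RHS](expect_cst (g s) (policy_stochastic s (pi_policy k))).
apply: eq_bigr => a _; have := g_excessive s a; rewrite le_eqVlt.
by case/orP=> [/eqP -> //|]; rewrite -subr_gt0 => /pi_gap0 ->; rewrite !mul0r.
Qed.

Lemma pi_eventually_harmonic : \forall k \near \oo, Ppi P (pi k) g = g.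
Proof.
have gap_large : \forall k \near \oo, forall s a,
    0 < gain_gap s a -> 2 * dist0 < horizon k * gain_gap s a.
  apply: filter_forall => s; apply: filter_forall => a.
  have [gap_gt0|_] := ltP 0 (gain_gap s a); last exact: nearW.
  move/cvgryPgt: horizon_cvgy => /(_ (2 * dist0 / gain_gap s a)).
  by apply: filterS => k lt_k _; rewrite -ltr_pdivrMr.
by apply: filterS gap_large => k; exact: pi_harmonic_of_horizon.
Qed.

End anchored_value_iteration.

End stepsizes.

Theorem theorem10 (R : realType) (S A : finType) (a0 : A)
  (P : S -> A -> S -> R) (r : S -> A -> R)
  (gstar hstar : S -> R)
  (lam : nat -> R) (V : nat -> S -> R) (pi : nat -> S -> A -> R) :
  is_kernel P ->
  modified_bellman a0 P r gstar hstar ->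
  lam 0%N = 1 ->
  (forall k, (1 <= k)%N -> lam k.+1 <= lam k /\ lam k < 1) ->
  lam @ \oo --> 0 ->
  (forall k, (1 <= k)%N ->
     V k = (fun s => lam k * V 0%N s + (1 - lam k) * Tbell a0 P r (V k.-1) s)) ->
  (forall k, is_policy (pi k) /\ Tpi P r (pi k) (V k) = Tbell a0 P r (V k)) ->
  exists K : nat,
    (forall k, (K <= k)%N -> Ppi P (pi k) gstar = gstar) /\
    (forall K', (K' < K)%N -> ~ (forall k, (K' <= k)%N -> Ppi P (pi k) gstar = gstar)) /\
    (forall k, (K < k)%N ->
       supnorm (fun s => gstar s - gpi P r (pi k) s)
         <= supnorm (fun s => Tbell a0 P r (V k) s - V k s - gstar s) /\
       supnorm (fun s => Tbell a0 P r (V k) s - V k s - gstar s)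
         <= 2 * (1 - \sum_(1 <= i < k.+1) (lam i * \prod_(i <= j < k.+1) (1 - lam j)))
              * supnorm (fun s => V 0%N s - hstar s)
            + 2 * (\prod_(K <= j < k.+1) (1 - lam j)) * supnorm gstar).
Proof.
move=> P_kernel [g_max [h_bellman [d d_opt]]] lam0 lam_step lam_cvg0 V_rec pi_ok.
have pi_policy k := (pi_ok k).1; have pi_greedy k := (pi_ok k).2.
have g_exc s a : expect (P s a) gstar <= gstar s by rewrite -g_max; exact: le_bigmax.
have h_le s a : r s a + expect (P s a) hstar <= hstar s + gstar s.
  by rewrite -h_bellman; exact: le_Tbell.
have d_g s : expect (P s (d s)) gstar = gstar s := (d_opt s).1.
have d_h s : r s (d s) + expect (P s (d s)) hstar = hstar s + gstar s := (d_opt s).2.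
have [K0 _ K0_harm] := pi_eventually_harmonic lam0 lam_step lam_cvg0 P_kernel
  g_exc h_le d_g d_h V_rec pi_policy pi_greedy.
pose harmonic_from K := `[< forall k, (K <= k)%N -> Ppi P (pi k) gstar = gstar >].
have [K /asboolP K_harm K_min] := ex_minnP (ex_intro harmonic_from K0 (asboolT K0_harm)).
exists K; split=> //; split=> [K' K'_lt K'_harm|k K_lt].
  by have := K_min K' (asboolT K'_harm); rewrite leqNgt K'_lt.
split.
  apply: supnorm_le => [|s]; first exact: supnorm_ge0.
  exact: greedy_gain_near (pi_policy k) (pi_greedy k) (K_harm k (ltnW K_lt)).
apply: supnorm_le => [|s].
  apply: addr_ge0; apply: mulr_ge0; rewrite ?mulr_ge0 //;
    by [exact: anchor_coef_ge0 | exact: supnorm_ge0 | exact: prod_one_minus_lam_ge0].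
exact: (bellman_residual_bound lam0 lam_step lam_cvg0 P_kernel g_exc h_le d_g d_h V_rec
  pi_policy pi_greedy K_harm s (leq_ltn_trans (leq0n K) K_lt)).
Qed.
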